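(* Let $\mathbf{F}$ be a normed space of functions over a set $X$. Then $\mathbf{F}$ is reflexive if and only if $\mathbf{F}$ is regular and the closed linear span of the point evaluations $\{x_{\mathbf{F}}:x\in X\}$ equals $\mathbf{F}^*$.
   Context: A normed space of functions over a set $X$ is a linear subspace of the space $\mathcal{F}(X)$ of all functions $X\to\mathbb{C}$ with a norm for which each point evaluation $x_{\mathbf{F}}:f\mapsto f(x)$ is bounded. $\mathbf{F}$ is regular if its closed unit ball is closed in $\mathcal{F}(X)$ with respect to the topology of pointwise convergence on $X$ (equivalently, the pointwise closure of the unit ball of $\mathbf{F}$, taken as the unit ball of the space of positive multiples of its elements with the corresponding Minkowski norm, gives back $\mathbf{F}$ with its norm). *)

From HB Require Import structures.
From mathcomp Require Import all_boot all_order all_algebra.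
From mathcomp Require Import boolp classical_sets cardinality reals.
From mathcomp Require Import complex.
Set Implicit Arguments. Unset Strict Implicit. Unset Printing Implicit Defensive.
Import Order.TTheory GRing.Theory Num.Theory.
Local Open Scope ring_scope.
Local Open Scope classical_set_scope.
Local Open Scope complex_scope.

Section FunSpaces.
Variables (R : realType) (X : Type).
Local Notation C := (R[i]).
Local Notation "|. z .|" := (Normc.normc z).

Definition lincomb (a : C) (f g : X -> C) : X -> C := fun x => a * f x + g x.

Definition normed_fun_space (F : set (X -> C)) (N : (X -> C) -> R) : Prop :=
  [/\ F (fun=> 0),
      (forall a f g, F f -> F g -> F (lincomb a f g)),
      (forall f, F f -> 0 <= N f),
      (forall f, F f -> N f = 0 -> f = (fun=> 0)) &
      (forall a f, F f -> N (fun x => a * f x) = |. a .| * N f)] /\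
  (forall f g, F f -> F g -> N (fun x => f x + g x) <= N f + N g) /\
  (forall x : X, exists M : R, forall f, F f -> |. f x .| <= M * N f).

Definition dual_elt (F : set (X -> C)) (N : (X -> C) -> R)
    (phi : (X -> C) -> C) : Prop :=
  (forall a f g, F f -> F g -> phi (lincomb a f g) = a * phi f + phi g) /\
  (exists M : R, forall f, F f -> |. phi f .| <= M * N f).

Definition dual_norm (F : set (X -> C)) (N : (X -> C) -> R)
    (phi : (X -> C) -> C) : R :=
  sup [set |. phi f .| | f in [set f | F f /\ N f <= 1]].

Definition bidual_elt (F : set (X -> C)) (N : (X -> C) -> R)
    (Psi : ((X -> C) -> C) -> C) : Prop :=
  (forall a phi psi, dual_elt F N phi -> dual_elt F N psi ->
      Psi (fun f => a * phi f + psi f) = a * Psi phi + Psi psi) /\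
  (exists M : R, forall phi, dual_elt F N phi ->
      |. Psi phi .| <= M * dual_norm F N phi).

(* reflexive: the canonical embedding F -> F^**, f |-> (phi |-> phi f),
   is surjective *)
Definition reflexive_fs (F : set (X -> C)) (N : (X -> C) -> R) : Prop :=
  forall Psi, bidual_elt F N Psi ->
    exists f, F f /\ forall phi, dual_elt F N phi -> Psi phi = phi f.

(* closure in C^X for the topology of pointwise convergence (product topology):
   every basic neighbourhood of g meets A *)
Definition pointwise_closure (A : set (X -> C)) : set (X -> C) :=
  fun g => forall (S : set X) (e : R), finite_set S -> 0 < e ->
    exists f, A f /\ forall x, S x -> |. f x - g x .| < e.

Definition regular_fs (F : set (X -> C)) (N : (X -> C) -> R) : Prop :=
  pointwise_closure [set f | F f /\ N f <= 1] `<=` [set f | F f /\ N f <= 1].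

(* the closed linear span in F^* of the point evaluations is all of F^*
   (it is always contained in F^*, which is closed) *)
Definition evals_span_dense (F : set (X -> C)) (N : (X -> C) -> R) : Prop :=
  forall phi, dual_elt F N phi -> forall e : R, 0 < e ->
    exists s : seq (C * X),
      dual_norm F N (fun f => phi f - \sum_(p <- s) p.1 * f p.2) < e.

End FunSpaces.

(* Reflexive implies regular: for [g] in the pointwise closure of the unit
   ball, [\sum_i a_i x_i |-> \sum_i a_i g x_i] is bounded by the dual norm on the
   span of the point evaluations, so a Hahn-Banach extension of it lies in F**;
   reflexivity represents it by a function that must be [g], and testing against
   a norming functional of [g] gives [N g <= 1].  Reflexive implies that the
   evaluations are dense: otherwise Hahn-Banach gives an element of F** that
   vanishes on every [x_F] but not on some [phi], and only the zero function
   could represent it.  Conversely, for [Psi] in F** the function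
   [g x = Psi x_F] is, up to a factor, a pointwise limit of the unit ball
   (Goldstine's argument, run in C^n with Hahn-Banach), hence lies in F by
   regularity; [Psi] and [phi |-> phi g] agree on the span of the evaluations
   and are both continuous, hence agree on F^*.  Hahn-Banach with prescribed
   values is obtained from the fact that a minimal sublinear functional, which
   exists by Zorn's lemma, is linear. *)

From HB Require Import structures.
From mathcomp Require Import all_boot all_order all_algebra.
From mathcomp Require Import boolp classical_sets cardinality reals functions.
From mathcomp Require Import complex.
From mathcomp Require finmap.
From mathcomp Require Import ring lra.
Set Implicit Arguments. Unset Strict Implicit. Unset Printing Implicit Defensive.
Import Order.TTheory GRing.Theory Num.Theory.
Local Open Scope ring_scope.
Local Open Scope classical_set_scope.
Local Open Scope complex_scope.


Local Notation "|. z .|" := (Normc.normc z).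

Section InfImage.
Variables (R : realType) (T : Type) (A : set T) (u : T -> R).

Lemma inf_image_le b t :
  (forall t, A t -> b <= u t) -> A t -> inf [set u t | t in A] <= u t.
Proof.
move=> lb At; apply: ge_inf; last by exists t.
by exists b => _ [s As <-]; exact: lb.
Qed.

Lemma le_inf_image c :
  A !=set0 -> (forall t, A t -> c <= u t) -> c <= inf [set u t | t in A].
Proof.
move=> [t At] lb; apply: lb_le_inf; first by exists (u t), t.
by move=> _ [s As <-]; exact: lb.
Qed.

Lemma inf_image_lt c :
  A !=set0 -> inf [set u t | t in A] < c -> exists2 t, A t & u t < c.
Proof.
move=> [t At] /inf_lt []; first by exists (u t), t.
by move=> _ [s As <-] us; exists s.
Qed.

Lemma inf_image_approx e :
  A !=set0 -> 0 < e -> exists2 t, A t & u t < inf [set u t | t in A] + e.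
Proof. by move=> A0 e0; apply: inf_image_lt => //; rewrite ltrDl. Qed.

End InfImage.

(** * Hahn-Banach with prescribed values *)

Section Sublinear.
Variables (R : realType) (V : lmodType R[i]) (P : set V).
Hypothesis P0 : P 0.
Hypothesis PD : forall x y, P x -> P y -> P (x + y).
Hypothesis PZ : forall (a : R[i]) x, P x -> P (a *: x).

Lemma subspaceN x : P x -> P (- x).
Proof. by move=> Px; rewrite -scaleN1r; apply: PZ. Qed.

Lemma subspaceB x y : P x -> P y -> P (x - y).
Proof. by move=> Px Py; apply/PD/subspaceN. Qed.

(* [V] is regarded as a real space, real scalars acting through [r%:C]. *)
Definition sublinear_on (q : V -> R) :=
  (forall x y, P x -> P y -> q (x + y) <= q x + q y) /\
  (forall r x, P x -> 0 < r -> q (r%:C *: x) <= r * q x).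

Section SublinearTheory.
Variable q : V -> R.
Hypothesis q_sublinear : sublinear_on q.

Lemma sublinear_subadditive x y : P x -> P y -> q (x + y) <= q x + q y.
Proof. exact: q_sublinear.1. Qed.

Lemma sublinear_homo r x : P x -> 0 < r -> q (r%:C *: x) = r * q x.
Proof.
move=> Px r0; apply/le_anti; rewrite q_sublinear.2 //=.
have ri0 : 0 < r^-1 by rewrite invr_gt0.
have := q_sublinear.2 _ _ (PZ r%:C Px) ri0.
rewrite scalerA -rmorphM mulVf ?gt_eqF // scale1r => le_q.
by rewrite -(ler_pM2l ri0) mulrA mulVf ?gt_eqF // mul1r.
Qed.

Lemma sublinear0 : q 0 = 0.
Proof. by have := sublinear_homo P0 (ltr0Sn _ 1); rewrite scaler0; lra. Qed.

Lemma sublinear_homo0 r x : P x -> 0 <= r -> q (r%:C *: x) = r * q x.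
Proof.
move=> Px; rewrite le_eqVlt => /orP[/eqP<-|r0]; last exact: sublinear_homo.
by rewrite rmorph0 scale0r mul0r sublinear0.
Qed.

Lemma sublinear_oppr_le x : P x -> - q (- x) <= q x.
Proof.
move=> Px; have := sublinear_subadditive Px (subspaceN Px).
by rewrite addrN sublinear0; lra.
Qed.

End SublinearTheory.

Section Minorants.
Variable p : V -> R.
Hypothesis p_sublinear : sublinear_on p.

Definition below_on (q1 q2 : V -> R) := forall x, P x -> q1 x <= q2 x.

Definition minorant (q : V -> R) := sublinear_on q /\ below_on q p.

Lemma minorant_ge q x : minorant q -> P x -> - p (- x) <= q x.
Proof.
move=> [q_sub q_le] Px; have := sublinear_oppr_le q_sub Px.
by have := q_le _ (subspaceN Px); lra.
Qed.

Local Notation minorants := {q : V -> R | minorant q}.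

Section ChainInf.
Variable A : set minorants.
Hypothesis A0 : A !=set0.
Hypothesis A_total : total_on A (fun a b => below_on (sval b) (sval a)).

Definition chain_inf x := inf [set sval a x | a in A].

Lemma chain_inf_le a x : P x -> A a -> chain_inf x <= sval a x.
Proof.
move=> Px Aa; apply: (@inf_image_le _ _ _ _ (- p (- x))) => // b _.
exact: minorant_ge (svalP b) Px.
Qed.

Lemma minorant_chain_inf : minorant chain_inf.
Proof.
have [a0 Aa0] := A0.
split; last by move=> x Px; exact: le_trans (chain_inf_le Px Aa0) ((svalP a0).2 _ Px).
split=> [x y Px Py|r x Px r0].
  apply/ler_addgt0Pr => e e0; have e20 : 0 < e / 2 by rewrite divr_gt0.
  have [a1 Aa1 a1y] := inf_image_approx (fun a => sval a y) A0 e20.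
  have [a2 Aa2 a2x] := inf_image_approx (fun a => sval a x) A0 e20.
  have [[a1_sub _] [a2_sub _]] := (svalP a1, svalP a2).
  have := chain_inf_le (PD Px Py) Aa1; have := chain_inf_le (PD Px Py) Aa2.
  rewrite -/(chain_inf y) -/(chain_inf x) in a1y a2x.
  case: (A_total Aa1 Aa2) => a12.
    by have := a2_sub.1 _ _ Px Py; have := a12 _ Py; lra.
  by have := a1_sub.1 _ _ Px Py; have := a12 _ Px; lra.
have ri0 : 0 < r^-1 by rewrite invr_gt0.
suff le_r : r^-1 * chain_inf (r%:C *: x) <= chain_inf x.
  by rewrite -(ler_pM2l ri0) mulrA mulVf ?gt_eqF // mul1r.
apply: le_inf_image => // a Aa.
have := chain_inf_le (PZ r%:C Px) Aa.
rewrite (sublinear_homo (svalP a).1 Px r0) => le_a.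
by rewrite -(ler_pM2l r0) mulrA mulfV ?gt_eqF // mul1r.
Qed.

End ChainInf.

Lemma exists_minimal_minorant : exists2 q, minorant q &
  forall q', minorant q' -> below_on q' q -> below_on q q'.
Proof.
pose below (a b : minorants) := `[< below_on (sval b) (sval a) >].
have p_minorant : minorant p by split.
have [|a b c /asboolP ab /asboolP bc|A A_total|m m_min] :=
  @ZL_preorder _ (exist _ p p_minorant) below.
- by move=> a; apply/asboolP.
- by apply/asboolP => x Px; exact: le_trans (bc x Px) (ab x Px).
- have [A0|/nonemptyPn A0] := pselect (A !=set0); last first.
    by exists (exist _ p p_minorant) => s; rewrite A0.
  have A_total' : total_on A (fun a b => below_on (sval b) (sval a)).
    by move=> a b Aa Ab; case: (A_total a b Aa Ab) => /asboolP; [left|right].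
  exists (exist _ _ (minorant_chain_inf A0 A_total')) => a Aa.
  by apply/asboolP => x Px; exact: chain_inf_le.
exists (sval m); first exact: svalP.
by move=> q' q'_min q'_le; apply/asboolP/(m_min (exist _ q' q'_min))/asboolP.
Qed.

Section MinimalMinorant.
Variable q : V -> R.
Hypothesis q_minorant : minorant q.
Hypothesis q_minimal : forall q', minorant q' -> below_on q' q -> below_on q q'.
Let q_sublinear := q_minorant.1.

Section Descent.
Variable x : V.
Hypothesis Px : P x.

(* Pushing [q] down in the direction [x]; minimality forces [q_down = q]. *)
Definition q_down y := inf [set q (y + t%:C *: x) - t * q x | t in [set t | 0 <= t]].

Lemma q_down_le y t : P y -> 0 <= t -> q_down y <= q (y + t%:C *: x) - t * q x.
Proof.
move=> Py t0; apply: (@inf_image_le _ _ _ _ (- q (- y))) => // s s0.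
have := sublinear_subadditive q_sublinear (PD Py (PZ s%:C Px)) (subspaceN Py).
by rewrite addrC addKr (sublinear_homo0 q_sublinear Px s0); lra.
Qed.

Lemma le_q_down y c : (forall t, 0 <= t -> c <= q (y + t%:C *: x) - t * q x) ->
  c <= q_down y.
Proof. by move=> lb; apply: le_inf_image => //; exists 0 => /=. Qed.

Lemma q_down_approx y e : 0 < e ->
  exists2 t, 0 <= t & q (y + t%:C *: x) - t * q x < q_down y + e.
Proof. by move=> e0; apply: inf_image_approx => //; exists 0 => /=. Qed.

Lemma q_down_le_q y : P y -> q_down y <= q y.
Proof.
by move=> Py; have := q_down_le Py (lexx 0); rewrite rmorph0 scale0r addr0 mul0r subr0.
Qed.

Lemma minorant_q_down : minorant q_down.
Proof.
split; last by move=> y Py; exact: le_trans (q_down_le_q Py) (q_minorant.2 _ Py).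
split=> [y1 y2 P1 P2|r y Py r0].
  apply/ler_addgt0Pr => e e0; have e20 : 0 < e / 2 by rewrite divr_gt0.
  have [t1 t10 le1] := q_down_approx y1 e20.
  have [t2 t20 le2] := q_down_approx y2 e20.
  have := q_down_le (PD P1 P2) (addr_ge0 t10 t20).
  have -> : y1 + y2 + (t1 + t2)%:C *: x = (y1 + t1%:C *: x) + (y2 + t2%:C *: x).
    by rewrite rmorphD scalerDl addrACA.
  have := sublinear_subadditive q_sublinear (PD P1 (PZ t1%:C Px)) (PD P2 (PZ t2%:C Px)).
  lra.
have ri0 : 0 < r^-1 by rewrite invr_gt0.
suff le_r : r^-1 * q_down (r%:C *: y) <= q_down y.
  by rewrite -(ler_pM2l ri0) mulrA mulVf ?gt_eqF // mul1r.
apply: le_q_down => t t0.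
have := q_down_le (PZ r%:C Py) (mulr_ge0 (ltW r0) t0).
have -> : r%:C *: y + (r * t)%:C *: x = r%:C *: (y + t%:C *: x).
  by rewrite scalerDr scalerA -rmorphM.
rewrite (sublinear_homo q_sublinear (PD Py (PZ t%:C Px)) r0) -mulrA -mulrBr => le_r.
by rewrite -(ler_pM2l r0) mulrA mulfV ?gt_eqF // mul1r.
Qed.

Lemma minimal_minorant_oppr_le : q (- x) <= - q x.
Proof.
have := q_minimal minorant_q_down (fun y Py => q_down_le_q Py) (subspaceN Px).
have := q_down_le (subspaceN Px) (@ler01 R).
by rewrite rmorph1 scale1r addNr sublinear0 // mul1r sub0r; lra.
Qed.

End Descent.

Lemma minimal_minorantN x : P x -> q (- x) = - q x.
Proof.
move=> Px; apply/le_anti; rewrite minimal_minorant_oppr_le //=.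
by have := sublinear_oppr_le q_sublinear Px; lra.
Qed.

Lemma minimal_minorantD x y : P x -> P y -> q (x + y) = q x + q y.
Proof.
move=> Px Py; apply/le_anti; rewrite sublinear_subadditive //=.
have := sublinear_subadditive q_sublinear (subspaceN Px) (subspaceN Py).
by rewrite -opprD !minimal_minorantN //; [lra | exact: PD].
Qed.

Lemma minimal_minorantZ r x : P x -> q (r%:C *: x) = r * q x.
Proof.
move=> Px; have [r0|r0] := lerP 0 r; first exact: sublinear_homo0.
have -> : r%:C *: x = - ((- r)%:C *: x) by rewrite rmorphN scaleNr opprK.
rewrite minimal_minorantN; last exact: PZ.
by rewrite sublinear_homo0 // ?oppr_ge0 ?ltW // mulNr opprK.
Qed.

End MinimalMinorant.

Lemma linear_minorant : exists l : V -> R,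
  [/\ (forall x y, P x -> P y -> l (x + y) = l x + l y),
      (forall r x, P x -> l (r%:C *: x) = r * l x) &
      (forall x, P x -> l x <= p x)].
Proof.
have [q q_minorant q_minimal] := exists_minimal_minorant.
exists q; split; [exact: minimal_minorantD | exact: minimal_minorantZ | exact: q_minorant.2].
Qed.

End Minorants.

Section Constraints.
Variable p : V -> R.
Hypothesis p_sublinear : sublinear_on p.
Variables (I : Type) (d : I -> V) (h : I -> R).
Hypothesis Pd : forall i, P (d i).
Hypothesis h_le_p : forall s : seq (R * I),
  \sum_(u <- s) u.1 * h u.2 <= p (\sum_(u <- s) u.1%:C *: d u.2).

Definition dcomb (s : seq (R * I)) := \sum_(u <- s) u.1%:C *: d u.2.
Definition hcomb (s : seq (R * I)) := \sum_(u <- s) u.1 * h u.2.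
Definition scale_coefs (r : R) (s : seq (R * I)) := [seq (r * u.1, u.2) | u <- s].

Lemma P_dcomb s : P (dcomb s).
Proof.
elim: s => [|u s IH]; first by rewrite /dcomb big_nil.
by rewrite /dcomb big_cons; apply: PD => //; apply: PZ.
Qed.

Lemma dcomb_cat s1 s2 : dcomb (s1 ++ s2) = dcomb s1 + dcomb s2.
Proof. exact: big_cat. Qed.

Lemma hcomb_cat s1 s2 : hcomb (s1 ++ s2) = hcomb s1 + hcomb s2.
Proof. exact: big_cat. Qed.

Lemma dcomb_scale r s : dcomb (scale_coefs r s) = r%:C *: dcomb s.
Proof.
rewrite /dcomb big_map scaler_sumr; apply: eq_bigr => u _ /=.
by rewrite scalerA rmorphM.
Qed.

Lemma hcomb_scale r s : hcomb (scale_coefs r s) = r * hcomb s.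
Proof.
by rewrite /hcomb big_map mulr_sumr; apply: eq_bigr => u _ /=; rewrite mulrA.
Qed.

(* Every linear functional below [p_constrained] is squeezed to [h i] at [d i],
   since [p_constrained (d i) <= h i] and [p_constrained (- d i) <= - h i]. *)
Definition p_constrained x :=
  inf [set p (x - dcomb s) + hcomb s | s in [set: seq (R * I)]].

Lemma p_constrained_lb x s : P x -> - p (- x) <= p (x - dcomb s) + hcomb s.
Proof.
move=> Px; have := h_le_p (scale_coefs (-1) s).
rewrite -/(hcomb _) -/(dcomb _) hcomb_scale dcomb_scale rmorphN1 scaleN1r mulN1r.
have := sublinear_subadditive p_sublinear (subspaceB Px (P_dcomb s)) (subspaceN Px).
by rewrite addrC addKr; lra.
Qed.

Lemma p_constrained_le x s : P x -> p_constrained x <= p (x - dcomb s) + hcomb s.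
Proof.
move=> Px; apply: (@inf_image_le _ _ _ _ (- p (- x))) => // t _.
exact: p_constrained_lb.
Qed.

Lemma p_constrained_le_p x : P x -> p_constrained x <= p x.
Proof.
move=> Px; have := p_constrained_le [::] Px.
by rewrite /dcomb /hcomb !big_nil subr0 addr0.
Qed.

Lemma sublinear_p_constrained : sublinear_on p_constrained.
Proof.
have nonempty : [set: seq (R * I)] !=set0 by exists [::].
split=> [x y Px Py|r x Px r0].
  apply/ler_addgt0Pr => e e0; have e20 : 0 < e / 2 by rewrite divr_gt0.
  have [s1 _ le1] := inf_image_approx (fun s => p (x - dcomb s) + hcomb s) nonempty e20.
  have [s2 _ le2] := inf_image_approx (fun s => p (y - dcomb s) + hcomb s) nonempty e20.
  have := p_constrained_le (s1 ++ s2) (PD Px Py).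
  rewrite dcomb_cat hcomb_cat opprD addrACA.
  have := sublinear_subadditive p_sublinear
    (subspaceB Px (P_dcomb s1)) (subspaceB Py (P_dcomb s2)).
  rewrite -/(p_constrained x) -/(p_constrained y) in le1 le2.
  lra.
have ri0 : 0 < r^-1 by rewrite invr_gt0.
suff le_r : r^-1 * p_constrained (r%:C *: x) <= p_constrained x.
  by rewrite -(ler_pM2l ri0) mulrA mulVf ?gt_eqF // mul1r.
apply: le_inf_image => // s _.
have := p_constrained_le (scale_coefs r s) (PZ r%:C Px).
rewrite dcomb_scale hcomb_scale -scalerBr.
rewrite (sublinear_homo p_sublinear (subspaceB Px (P_dcomb s)) r0) -mulrDr => le_r.
by rewrite -(ler_pM2l r0) mulrA mulfV ?gt_eqF // mul1r.
Qed.

Lemma p_constrained_at i : p_constrained (d i) <= h i /\ p_constrained (- d i) <= - h i.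
Proof.
have p0 := sublinear0 p_sublinear.
split.
  have := p_constrained_le [:: (1, i)] (Pd i).
  by rewrite /dcomb /hcomb !big_seq1 /= scale1r subrr p0 add0r mul1r.
have := p_constrained_le [:: (-1, i)] (subspaceN (Pd i)).
by rewrite /dcomb /hcomb !big_seq1 /= rmorphN1 scaleN1r subrr p0 add0r mulN1r.
Qed.

Theorem real_hahn_banach : exists l : V -> R,
  [/\ (forall x y, P x -> P y -> l (x + y) = l x + l y),
      (forall r x, P x -> l (r%:C *: x) = r * l x),
      (forall x, P x -> l x <= p x) &
      (forall i, l (d i) = h i)].
Proof.
have [l [lD lZ l_le]] := linear_minorant sublinear_p_constrained.
exists l; split => // [x Px|i]; first exact: le_trans (l_le x Px) (p_constrained_le_p Px).
have [le_d le_Nd] := p_constrained_at i.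
have lN : l (- d i) = - l (d i).
  by rewrite -scaleN1r -(rmorphN1 (real_complex R)) lZ // mulN1r.
by have := l_le _ (Pd i); have := l_le _ (subspaceN (Pd i)); rewrite lN; lra.
Qed.

End Constraints.

End Sublinear.

Section ComplexFacts.
Variable R : realType.

Lemma normc_real (r : R) : |. r%:C .| = `|r| :> R.
Proof. by rewrite /Normc.normc /= expr0n /= addr0 sqrtr_sqr. Qed.

Lemma normc_ge0 (z : R[i]) : 0 <= |. z .|.
Proof. by case: z => a b; rewrite /Normc.normc sqrtr_ge0. Qed.

Lemma normc_gt0 (z : R[i]) : z != 0 -> 0 < |. z .|.
Proof.
move=> z0; rewrite lt_def normc_ge0 andbT.
by apply/eqP => /Normc.eq0_normc /eqP; rewrite (negPf z0).
Qed.

Lemma Re_le_normc (z : R[i]) : complex.Re z <= |. z .|.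
Proof.
case: z => a b; rewrite /Normc.normc /=.
have [a0|a0] := lerP a 0; first exact: le_trans a0 (sqrtr_ge0 _).
rewrite -{1}(gtr0_norm a0) -sqrtr_sqr; apply: ler_wsqrtr.
by rewrite lerDl sqr_ge0.
Qed.

Lemma ReD (x y : R[i]) : complex.Re (x + y) = complex.Re x + complex.Re y.
Proof. by case: x; case: y. Qed.

Lemma normc_conj (z : R[i]) : |. (z^*) .| = |. z .|.
Proof. by case: z => a b; rewrite /Normc.normc /= sqrrN. Qed.

Lemma Re_conjM (z : R[i]) : complex.Re (z^* * z) = |. z .| ^+ 2.
Proof.
case: z => a b; rewrite /Normc.normc /= sqr_sqrtr; last by rewrite addr_ge0 ?sqr_ge0.
by rewrite !expr2; lra.
Qed.

End ComplexFacts.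

Section ComplexHahnBanach.
Variables (R : realType) (V : lmodType R[i]) (P : set V) (p : V -> R).
Hypothesis P0 : P 0.
Hypothesis PD : forall x y, P x -> P y -> P (x + y).
Hypothesis PZ : forall (a : R[i]) x, P x -> P (a *: x).
Hypothesis pD : forall x y, P x -> P y -> p (x + y) <= p x + p y.
Hypothesis pZ : forall (a : R[i]) x, P x -> p (a *: x) = |. a .| * p x.
Variables (I : Type) (d : I -> V) (h : I -> R[i]).
Hypothesis Pd : forall i, P (d i).
Hypothesis h_le_p : forall s : seq (R[i] * I),
  |. \sum_(u <- s) u.1 * h u.2 .| <= p (\sum_(u <- s) u.1 *: d u.2).

Lemma seminorm_ge0 x : P x -> 0 <= p x.
Proof.
move=> Px; have := pD Px (subspaceN PZ Px); rewrite subrr -scaleN1r pZ //.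
by rewrite -(scale0r 0) pZ // Normc.normc0 normcN Normc.normc1; lra.
Qed.

Lemma seminorm_sublinear : sublinear_on P p.
Proof. by split=> // r x Px r0; rewrite pZ // normc_real gtr0_norm. Qed.

(* A complex functional is recovered from its real part [l] as
   [L x = l x - 'i l ('i x)], so [L (d i) = h i] amounts to the two real
   constraints [l (d i) = Re (h i)] and [l ('i d i) = - Im (h i)]. *)
Let d_re (u : I * bool) := if u.2 then 'i *: d u.1 else d u.1.
Let h_re (u : I * bool) := if u.2 then - complex.Im (h u.1) else complex.Re (h u.1).

Lemma h_re_le_p (s : seq (R * (I * bool))) :
  \sum_(u <- s) u.1 * h_re u.2 <= p (\sum_(u <- s) u.1%:C *: d_re u.2).
Proof.
pose sC := [seq (if u.2.2 then u.1%:C * 'i else u.1%:C, u.2.1) | u <- s].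
have dE : \sum_(u <- s) u.1%:C *: d_re u.2 = \sum_(w <- sC) w.1 *: d w.2.
  by rewrite big_map; apply: eq_bigr => -[r [i []]] _ //=; rewrite scalerA.
have hE : \sum_(u <- s) u.1 * h_re u.2 = complex.Re (\sum_(w <- sC) w.1 * h w.2).
  clear dE; rewrite {}/sC; elim: s => [|[r [i b]] s IH]; first by rewrite !big_nil.
  rewrite map_cons !big_cons ReD -IH /h_re /=; congr (_ + _).
  by case: (h i) => a c; case: b => /=; lra.
by rewrite dE hE; exact: le_trans (Re_le_normc _) (h_le_p _).
Qed.

Theorem complex_hahn_banach : exists L : V -> R[i],
  [/\ (forall a x y, P x -> P y -> L (a *: x + y) = a * L x + L y),
      (forall x, P x -> |. L x .| <= p x) &
      (forall i, L (d i) = h i)].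
Proof.
have Pd_re u : P (d_re u) by case: u => i [] /=; [exact: PZ | exact: Pd].
have [l [lD lZ l_le l_d]] :=
  real_hahn_banach P0 PD PZ seminorm_sublinear Pd_re h_re_le_p.
pose L x := Complex (l x) (- l ('i *: x)).
have lN x : P x -> l (- x) = - l x.
  by move=> Px; rewrite -scaleN1r -(rmorphN1 (real_complex R)) lZ // mulN1r.
have LD x y : P x -> P y -> L (x + y) = L x + L y.
  by move=> Px Py; rewrite /L scalerDr !lD ?opprD //; exact: PZ.
have LZr (r : R) x : P x -> L (r%:C *: x) = r%:C * L x.
  move=> Px; rewrite /L scalerA mulrC -scalerA !lZ //; last exact: PZ.
  by apply/eqP; rewrite eq_complex /=; apply/andP; split; apply/eqP; lra.
have LZi x : P x -> L ('i *: x) = 'i * L x.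
  move=> Px; rewrite /L scalerA -expr2 sqr_i scaleN1r lN //.
  by apply/eqP; rewrite eq_complex /=; apply/andP; split; apply/eqP; lra.
have LZ a x : P x -> L (a *: x) = a * L x.
  move=> Px; have PIx := PZ (complex.Im a)%:C Px.
  rewrite {1}(complexE a) scalerDl -scalerA LD ?LZi ?LZr ?LZr //; do ?exact: PZ.
  by rewrite [in RHS](complexE a) mulrDl mulrA.
exists L; split.
- by move=> a x y Px Py; rewrite LD ?LZ //; exact: PZ.
- move=> x Px; set w := L x.
  have := l_le _ (PZ w^* Px).
  have -> : l (w^* *: x) = complex.Re (w^* * w) by rewrite -LZ.
  rewrite Re_conjM pZ // normc_conj expr2.
  have [w0|w0] := eqVneq w 0; first by rewrite w0 Normc.normc0 seminorm_ge0.
  by rewrite ler_pM2l // normc_gt0.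
- move=> i; have := l_d (i, false); have := l_d (i, true); rewrite /L /d_re /h_re /=.
  by case: (h i) => a b -> ->; rewrite opprK.
Qed.

End ComplexHahnBanach.

Section FunctionSpaceHahnBanach.
Variables (R : realType) (T : Type).
Variables (P : set (T -> R[i])) (p : (T -> R[i]) -> R).
Hypothesis P0 : P (fun=> 0).
Hypothesis Plin : forall a f g, P f -> P g -> P (lincomb a f g).
Hypothesis pD : forall f g, P f -> P g -> p (fun t => f t + g t) <= p f + p g.
Hypothesis pZ : forall a f, P f -> p (fun t => a * f t) = |. a .| * p f.

Let PZ a f : P f -> P (a *: f).
Proof.
by move=> Pf; have := Plin a Pf P0; congr P; apply/funext => t; rewrite /lincomb addr0.
Qed.

Let PD f g : P f -> P g -> P (f + g).
Proof.
by move=> Pf Pg; have := Plin 1 Pf Pg; congr P; apply/funext => t; rewrite /lincomb mul1r.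
Qed.

Theorem hahn_banach_fun (I : Type) (d : I -> T -> R[i]) (h : I -> R[i]) :
  (forall i, P (d i)) ->
  (forall s : seq (R[i] * I),
    |. \sum_(u <- s) u.1 * h u.2 .| <= p (fun t => \sum_(u <- s) u.1 * d u.2 t)) ->
  exists L : (T -> R[i]) -> R[i],
    [/\ (forall a f g, P f -> P g -> L (lincomb a f g) = a * L f + L g),
        (forall f, P f -> |. L f .| <= p f) &
        (forall i, L (d i) = h i)].
Proof.
move=> Pd h_le_p.
have sumE (s : seq (R[i] * I)) :
    \sum_(u <- s) u.1 *: d u.2 = (fun t => \sum_(u <- s) u.1 * d u.2 t).
  apply/funext => t; elim: s => [|u s IH]; first by rewrite !big_nil.
  by rewrite !big_cons -IH.
have h_le_p' s : |. \sum_(u <- s) u.1 * h u.2 .| <= p (\sum_(u <- s) u.1 *: d u.2).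
  by rewrite sumE.
have [L [Llin L_le Ld]] := complex_hahn_banach P0 PD PZ pD pZ Pd h_le_p'.
by exists L; split.
Qed.

Lemma norming_functional v : P v -> exists L : (T -> R[i]) -> R[i],
  [/\ (forall a f g, P f -> P g -> L (lincomb a f g) = a * L f + L g),
      (forall f, P f -> |. L f .| <= p f) & L v = (p v)%:C].
Proof.
move=> Pv.
have h_le_p (s : seq (R[i] * unit)) :
    |. \sum_(u <- s) u.1 * (p v)%:C .| <= p (fun t => \sum_(u <- s) u.1 * v t).
  have -> : (fun t => \sum_(u <- s) u.1 * v t) = (fun t => (\sum_(u <- s) u.1) * v t).
    by apply/funext => t; rewrite mulr_suml.
  by rewrite -mulr_suml pZ // Normc.normcM normc_real ger0_norm // (seminorm_ge0 P0 PZ pD pZ).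
have [L [Llin L_le Lv]] := @hahn_banach_fun _ (fun=> v) (fun=> (p v)%:C) (fun=> Pv) h_le_p.
by exists L; split => //; exact: (Lv tt).
Qed.

End FunctionSpaceHahnBanach.

Lemma linear_fun0 (R : realType) (T : Type) (P : set (T -> R[i]))
    (L : (T -> R[i]) -> R[i]) : P (fun=> 0) ->
  (forall a f g, P f -> P g -> L (lincomb a f g) = a * L f + L g) ->
  L (fun=> 0) = 0.
Proof.
move=> P0 Llin; have := Llin 1 _ _ P0 P0.
have -> : @lincomb R T 1 (fun=> 0) (fun=> 0) = fun=> 0.
  by apply/funext => t; rewrite /lincomb mul1r addr0.
by rewrite mul1r => L00; apply: (addrI (L (fun=> 0))); rewrite addr0 -L00.
Qed.

Lemma linear_ord_sum (R : realType) (n : nat) (L : ('I_n -> R[i]) -> R[i]) :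
  (forall a z w, L (lincomb a z w) = a * L z + L w) ->
  forall z, L z = \sum_k z k * L (fun j => (j == k)%:R).
Proof.
move=> Llin z.
have L0 : L (fun=> 0) = 0 by apply: (@linear_fun0 _ _ setT) => // *; exact: Llin.
have sum_seq (r : seq 'I_n) :
    L (fun j => \sum_(k <- r) z k * (j == k)%:R) =
    \sum_(k <- r) z k * L (fun j => (j == k)%:R).
  elim: r => [|k r IH].
    by rewrite big_nil -L0; congr L; apply/funext => j; rewrite big_nil.
  rewrite big_cons -IH -Llin; congr L; apply/funext => j.
  by rewrite /lincomb big_cons.
rewrite -sum_seq; congr L; apply/funext => j.
rewrite (bigD1 j) //= eqxx mulr1 big1 ?addr0 // => k kj.
by rewrite eq_sym (negbTE kj) mulr0.
Qed.

(** * Duals and biduals of normed spaces of functions *)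

Section NormedFunSpace.
Variables (R : realType) (X : Type) (F : set (X -> R[i])) (N : (X -> R[i]) -> R).
Hypothesis FN : normed_fun_space F N.
Local Notation C := R[i].
Local Notation dual := (dual_elt F N).
Local Notation dnorm := (dual_norm F N).

Let F0 : F (fun=> 0). Proof. by case: FN => -[]. Qed.
Let Flin a f g : F f -> F g -> F (lincomb a f g).
Proof. by case: FN => -[_ Flin _ _ _] _; exact: Flin. Qed.
Let N_ge0 f : F f -> 0 <= N f.
Proof. by case: FN => -[_ _ N_ge0 _ _] _; exact: N_ge0. Qed.
Let N_eq0 f : F f -> N f = 0 -> f = (fun=> 0).
Proof. by case: FN => -[_ _ _ N_eq0 _] _; exact: N_eq0. Qed.
Let NZ a f : F f -> N (fun x => a * f x) = |. a .| * N f.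
Proof. by case: FN => -[_ _ _ _ NZ] _; exact: NZ. Qed.
Let ND f g : F f -> F g -> N (fun x => f x + g x) <= N f + N g.
Proof. by case: FN => _ [ND _]; exact: ND. Qed.

Lemma fun_spaceZ a f : F f -> F (fun x => a * f x).
Proof.
by move=> Ff; have := Flin a Ff F0; congr F; apply/funext => x; rewrite /lincomb addr0.
Qed.

Lemma fun_spaceD f g : F f -> F g -> F (fun x => f x + g x).
Proof.
by move=> Ff Fg; have := Flin 1 Ff Fg; congr F; apply/funext => x; rewrite /lincomb mul1r.
Qed.

Lemma fun_space_norm0 : N (fun=> 0) = 0.
Proof. by have := NZ 0 F0; rewrite Normc.normc0 !mul0r. Qed.

Lemma dual0 phi : dual phi -> phi (fun=> 0) = 0.
Proof. by move=> [phi_lin _]; exact: linear_fun0 F0 phi_lin. Qed.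

Lemma dualZ phi a f : dual phi -> F f -> phi (fun x => a * f x) = a * phi f.
Proof.
move=> dphi Ff; have := dphi.1 a _ _ Ff F0; rewrite dual0 // addr0 => <-.
by congr phi; apply/funext => x; rewrite /lincomb addr0.
Qed.

Lemma dual_lincomb a phi psi : dual phi -> dual psi -> dual (lincomb a phi psi).
Proof.
move=> [phi_lin [M1 le1]] [psi_lin [M2 le2]]; split.
  by move=> b f g Ff Fg; rewrite /lincomb phi_lin // psi_lin //; ring.
exists (|. a .| * M1 + M2) => f Ff.
apply: le_trans (le_normcD _ _) _; rewrite Normc.normcM mulrDl -mulrA.
by apply: lerD; [apply: ler_wpM2l; [exact: normc_ge0 | exact: le1] | exact: le2].
Qed.

Lemma dual_zero : dual (fun=> 0).
Proof.
split; first by move=> *; rewrite mulr0 addr0.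
by exists 0 => f _; rewrite Normc.normc0 mul0r.
Qed.

Lemma dual_eval x : dual (fun f => f x).
Proof. by split => //; case: FN => _ [_]; exact. Qed.

Definition evals (s : seq (C * X)) (f : X -> C) := \sum_(u <- s) u.1 * f u.2.

Lemma evals_nil : evals [::] = fun=> 0.
Proof. by apply/funext => f; rewrite /evals big_nil. Qed.

Lemma evals_cons u s : evals (u :: s) = lincomb u.1 (fun f => f u.2) (evals s).
Proof. by apply/funext => f; rewrite /evals big_cons. Qed.

Lemma evals_scale a s f : evals [seq (a * u.1, u.2) | u <- s] f = a * evals s f.
Proof.
by rewrite /evals big_map mulr_sumr; apply: eq_bigr => u _; rewrite mulrA.
Qed.

Lemma dual_evals s : dual (evals s).
Proof.
elim: s => [|u s IH]; first by rewrite evals_nil; exact: dual_zero.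
by rewrite evals_cons; apply: dual_lincomb => //; exact: dual_eval.
Qed.

Lemma dual_sub_evals phi s : dual phi -> dual (fun f => phi f - evals s f).
Proof.
move=> dphi; have := dual_lincomb (-1) (dual_evals s) dphi; congr dual.
by apply/funext => f; rewrite /lincomb mulN1r addrC.
Qed.

Definition unit_ball := [set f | F f /\ N f <= 1].

Lemma unit_ball0 : unit_ball (fun=> 0).
Proof. by split => //; rewrite fun_space_norm0. Qed.

Lemma has_sup_dual phi : dual phi -> has_sup [set |. phi f .| | f in unit_ball].
Proof.
move=> [_ [M le_M]]; split.
  by exists (|. phi (fun=> 0) .|), (fun=> 0); [exact: unit_ball0|].
exists `|M| => _ [f [Ff Nf] <-]; apply: le_trans (le_M f Ff) _.
apply: le_trans (ler_wpM2r (N_ge0 Ff) (ler_norm M)) _.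
by rewrite -{2}(mulr1 `|M|) ler_wpM2l.
Qed.

Lemma dual_norm_ub phi f : dual phi -> F f -> N f <= 1 -> |. phi f .| <= dnorm phi.
Proof. by move=> dphi Ff Nf; apply: sup_upper_bound; [exact: has_sup_dual | exists f]. Qed.

Lemma dual_norm_le phi c :
  (forall f, F f -> N f <= 1 -> |. phi f .| <= c) -> dnorm phi <= c.
Proof.
move=> le_c; apply: ge_sup.
  by exists (|. phi (fun=> 0) .|), (fun=> 0); [exact: unit_ball0|].
by move=> _ [f [Ff Nf] <-]; exact: le_c.
Qed.

Lemma dual_norm_ge0 phi : dual phi -> 0 <= dnorm phi.
Proof.
by move=> dphi; apply: le_trans (dual_norm_ub dphi F0 _); rewrite ?normc_ge0 ?fun_space_norm0.
Qed.

Lemma dual_norm_bound phi f : dual phi -> F f -> |. phi f .| <= dnorm phi * N f.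
Proof.
move=> dphi Ff; have [Nf0|Nf0] := eqVneq (N f) 0.
  by rewrite (N_eq0 Ff Nf0) dual0 // Normc.normc0 fun_space_norm0 mulr0.
have Nf_gt0 : 0 < N f by rewrite lt_def Nf0 N_ge0.
have Ff' : F (fun x => (N f)^-1%:C * f x) by exact: fun_spaceZ.
have := dual_norm_ub dphi Ff'.
rewrite NZ // dualZ // Normc.normcM normc_real ger0_norm; last by rewrite invr_ge0 ltW.
rewrite mulVf ?gt_eqF // lexx => /(_ isT) le_phi.
by rewrite -ler_pdivrMr // mulrC.
Qed.

Lemma dual_normD phi psi : dual phi -> dual psi ->
  dnorm (fun f => phi f + psi f) <= dnorm phi + dnorm psi.
Proof.
move=> dphi dpsi; apply: dual_norm_le => f Ff Nf.
by apply: le_trans (le_normcD _ _) _; apply: lerD; exact: dual_norm_ub.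
Qed.

Lemma dual_normZ a phi : dual phi -> dnorm (fun f => a * phi f) = |. a .| * dnorm phi.
Proof.
move=> dphi; have daphi : dual (fun f => a * phi f).
  have := dual_lincomb a dphi dual_zero; congr dual.
  by apply/funext => f; rewrite /lincomb addr0.
apply/le_anti/andP; split.
  apply: dual_norm_le => f Ff Nf; rewrite Normc.normcM.
  by apply: ler_wpM2l; [exact: normc_ge0 | exact: dual_norm_ub].
have [a0|a0] := eqVneq a 0; first by rewrite {1}a0 Normc.normc0 mul0r dual_norm_ge0.
rewrite mulrC -ler_pdivlMr ?normc_gt0 //; apply: dual_norm_le => f Ff Nf.
by rewrite ler_pdivlMr ?normc_gt0 // mulrC -Normc.normcM; exact: dual_norm_ub.
Qed.

Lemma reflexive_interpolation (I : Type) (d : I -> (X -> C) -> C) (h : I -> C) :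
  reflexive_fs F N -> (forall i, dual (d i)) ->
  (forall s : seq (C * I),
    |. \sum_(u <- s) u.1 * h u.2 .| <= dnorm (fun f => \sum_(u <- s) u.1 * d u.2 f)) ->
  exists2 f, F f &
    (forall phi, dual phi -> |. phi f .| <= dnorm phi) /\ (forall i, d i f = h i).
Proof.
move=> refl dd h_le.
have [L [Llin L_le Ld]] := hahn_banach_fun dual_zero (fun a _ _ => @dual_lincomb a _ _)
  dual_normD dual_normZ dd h_le.
have [|f [Ff Lf]] := refl L.
  by split=> [a phi psi ? ?|]; [exact: Llin | exists 1 => phi ?; rewrite mul1r L_le].
exists f => //; split=> [phi dphi|i]; first by rewrite -Lf ?L_le.
by rewrite -Lf ?Ld.
Qed.

Lemma dual_norm_far phi e : dual phi ->
  (forall s, e <= dnorm (fun f => phi f - evals s f)) ->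
  forall t s, |. t .| * e <= dnorm (fun f => t * phi f + evals s f).
Proof.
move=> dphi far t s; have dts : dual (fun f => t * phi f + evals s f).
  exact: dual_lincomb (dual_evals s).
have [t0|t0] := eqVneq t 0.
  by rewrite {1}t0 Normc.normc0 mul0r dual_norm_ge0.
pose s' := [seq (- t^-1 * u.1, u.2) | u <- s].
have -> : (fun f => t * phi f + evals s f) = (fun f => t * (phi f - evals s' f)).
  by apply/funext => f; rewrite evals_scale mulrBr !mulrA mulrN mulNr opprK mulfV // mul1r.
by rewrite dual_normZ ?ler_wpM2l ?normc_ge0 //; exact: dual_sub_evals.
Qed.

Lemma reflexive_evals_dense : reflexive_fs F N -> evals_span_dense F N.
Proof.
move=> refl phi dphi e e0; apply: contrapT => near_none.
have far s : e <= dnorm (fun f => phi f - evals s f).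
  by rewrite leNgt; apply/negP => lt_e; apply: near_none; exists s.
pose d (o : option X) := if o is Some x then (fun f : X -> C => f x) else phi.
pose h (o : option X) := if o is Some x then 0 else e%:C.
have dd o : dual (d o) by case: o => [x|] //=; exact: dual_eval.
have split_sum (s : seq (C * option X)) : exists t s',
    (fun f => \sum_(u <- s) u.1 * d u.2 f) = (fun f => t * phi f + evals s' f) /\
    \sum_(u <- s) u.1 * h u.2 = t * e%:C.
  elim: s => [|[a [x|]] s [t [s' [dE hE]]]].
  - exists 0, [::]; rewrite !big_nil mul0r; split => //.
    by apply/funext => f; rewrite /evals !big_nil mul0r add0r.
  - exists t, ((a, x) :: s'); rewrite big_cons hE /= mulr0 add0r; split => //.
    by apply/funext => f; rewrite big_cons evals_cons /lincomb (congr1 (@^~ f) dE) /=; ring.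
  - exists (a + t), s'; rewrite big_cons hE /=; split; last by ring.
    by apply/funext => f; rewrite big_cons (congr1 (@^~ f) dE) /=; ring.
have h_le s : |. \sum_(u <- s) u.1 * h u.2 .| <=
    dnorm (fun f => \sum_(u <- s) u.1 * d u.2 f).
  have [t [s' [-> ->]]] := split_sum s.
  by rewrite Normc.normcM normc_real (ger0_norm (ltW e0)); exact: dual_norm_far.
have [f Ff [_ f_interp]] := reflexive_interpolation refl dd h_le.
have f0 : f = fun=> 0 by apply/funext => x; exact: (f_interp (Some x)).
have := f_interp None; rewrite /= f0 dual0 // => /(congr1 (@complex.Re R)) /= e_eq0.
by move: e0; rewrite -e_eq0 ltxx.
Qed.

Lemma points_finite (s : seq (C * X)) :
  finite_set [set x | exists2 u, List.In u s & u.2 = x].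
Proof.
elim: s => [|u s IH].
  by rewrite (_ : [set x | _] = set0) ?finite_set0 //; apply/seteqP; split => x // [].
rewrite (_ : [set x | _] = [set u.2] `|` [set x | exists2 v, List.In v s & v.2 = x]).
  by rewrite finite_setU; split => //; exact: finite_set1.
apply/seteqP; split => x /=.
  by move=> [v [<-|sv] <-]; [left | right; exists v].
by move=> [->|[v sv <-]]; [exists u => //; left | exists v => //; right].
Qed.

Lemma evals_sub_le (s : seq (C * X)) (f g : X -> C) (del : R) :
  (forall u, List.In u s -> |. g u.2 - f u.2 .| <= del) ->
  |. evals s g - evals s f .| <= (\sum_(u <- s) |. u.1 .|) * del.
Proof.
rewrite /evals; elim: s => [|u s IH] le_del.
  by rewrite !big_nil subrr Normc.normc0 mul0r.
rewrite !big_cons opprD addrACA -mulrBr mulrDl.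
apply: le_trans (le_normcD _ _) _; rewrite Normc.normcM.
apply: lerD; last by apply: IH => v sv; apply: le_del; right.
by apply: ler_wpM2l; [exact: normc_ge0 | apply: le_del; left].
Qed.

Lemma closure_unit_ball_evals g : pointwise_closure unit_ball g ->
  forall s, |. evals s g .| <= dnorm (evals s).
Proof.
move=> g_cl s; apply/ler_addgt0Pr => e e0.
set A := \sum_(u <- s) |. u.1 .|.
have A_ge0 : 0 <= A by apply: sumr_ge0 => u _; exact: normc_ge0.
have del_gt0 : 0 < e / (A + 1) by rewrite divr_gt0 // ltr_wpDl.
have [f [[Ff Nf] near_g]] := g_cl _ _ (points_finite s) del_gt0.
have le_f : |. evals s f .| <= dnorm (evals s).
  by apply: dual_norm_ub => //; exact: dual_evals.
have le_sub : |. evals s g - evals s f .| <= A * (e / (A + 1)).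
  apply: evals_sub_le => u su; rewrite -normcN opprB; apply/ltW/near_g; by exists u.
have le_e : A * (e / (A + 1)) <= e.
  by rewrite mulrA ler_pdivrMr ?ltr_wpDl // mulrDr mulr1 mulrC lerDl; exact: ltW.
have := le_normcD (evals s f) (evals s g - evals s f); rewrite addrC subrK.
lra.
Qed.

Lemma reflexive_regular : reflexive_fs F N -> regular_fs F N.
Proof.
move=> refl g g_cl.
have h_le s : |. \sum_(u <- s) u.1 * g u.2 .| <=
    dnorm (fun f => \sum_(u <- s) u.1 * (fun f => f u.2) f).
  exact: closure_unit_ball_evals.
have [f Ff [f_le f_interp]] := reflexive_interpolation refl dual_eval h_le.
have <- : f = g by apply/funext => x; exact: f_interp.
split => //; have [L [Llin L_le Lf]] := norming_functional F0 Flin ND NZ Ff.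
have dL : dual L by split => //; exists 1 => f' Ff'; rewrite mul1r L_le.
have := f_le _ dL; rewrite Lf normc_real ger0_norm ?N_ge0 // => /le_trans; apply.
by apply: dual_norm_le => f' Ff' Nf'; exact: le_trans (L_le _ Ff') Nf'.
Qed.

Section FiniteRestriction.
Variables (n : nat) (e : 'I_n -> X) (eps : R).
Hypothesis eps_gt0 : 0 < eps.

Definition l1norm (w : 'I_n -> C) := \sum_k |. w k .|.

Lemma l1norm_ge0 w : 0 <= l1norm w.
Proof. by apply: sumr_ge0 => k _; exact: normc_ge0. Qed.

(* The infimal convolution of [N], transported to [C^n] along [f |-> f \o e],
   with [eps^-1] times the l1 norm. *)
Definition restr_cost (z : 'I_n -> C) (f : X -> C) :=
  N f + eps^-1 * l1norm (fun k => z k - f (e k)).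
Definition restr_norm z := inf [set restr_cost z f | f in F].

Lemma restr_cost_ge0 z f : F f -> 0 <= restr_cost z f.
Proof.
by move=> Ff; rewrite addr_ge0 ?N_ge0 // mulr_ge0 ?l1norm_ge0 // invr_ge0 ltW.
Qed.

Lemma restr_norm_le z f : F f -> restr_norm z <= restr_cost z f.
Proof.
by move=> Ff; apply: (@inf_image_le _ _ _ _ 0) => // f' Ff'; exact: restr_cost_ge0.
Qed.

Lemma restr_norm_ge0 z : 0 <= restr_norm z.
Proof. by apply: le_inf_image; [exists (fun=> 0) | exact: restr_cost_ge0]. Qed.

Lemma restr_normD z w : restr_norm (fun k => z k + w k) <= restr_norm z + restr_norm w.
Proof.
have F_ne : F !=set0 by exists (fun=> 0).
apply/ler_addgt0Pr => d d0; have d20 : 0 < d / 2 by rewrite divr_gt0.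
have [f1 Ff1 le1] := inf_image_approx (restr_cost z) F_ne d20.
have [f2 Ff2 le2] := inf_image_approx (restr_cost w) F_ne d20.
have := restr_norm_le (fun k => z k + w k) (fun_spaceD Ff1 Ff2).
have := ND Ff1 Ff2; rewrite /restr_cost -/(restr_norm z) -/(restr_norm w) in le1 le2 *.
have l1D : l1norm (fun k => z k + w k - (f1 (e k) + f2 (e k))) <=
    l1norm (fun k => z k - f1 (e k)) + l1norm (fun k => w k - f2 (e k)).
  rewrite /l1norm -big_split /=; apply: ler_sum => k _.
  by rewrite opprD addrACA; exact: le_normcD.
have epsV_ge0 : 0 <= eps^-1 by rewrite invr_ge0 ltW.
have := ler_wpM2l epsV_ge0 l1D; rewrite mulrDr.
lra.
Qed.

Lemma restr_normZ_le a z : restr_norm (fun k => a * z k) <= |. a .| * restr_norm z.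
Proof.
have [a0|a0] := eqVneq a 0.
  rewrite a0 Normc.normc0 mul0r; apply: le_trans (restr_norm_le _ F0) _.
  rewrite /restr_cost fun_space_norm0 /l1norm big1 ?mulr0 ?addr0 // => k _.
  by rewrite mul0r subr0 Normc.normc0.
have a_gt0 := normc_gt0 a0.
rewrite mulrC -ler_pdivrMr //; apply: le_inf_image; first by exists (fun=> 0).
move=> f Ff; rewrite ler_pdivrMr // mulrC.
apply: le_trans (restr_norm_le _ (fun_spaceZ a Ff)) _.
rewrite /restr_cost NZ // mulrDr lerD // mulrCA.
apply: ler_wpM2l; first by rewrite invr_ge0 ltW.
rewrite /l1norm mulr_sumr; apply: ler_sum => k _.
by rewrite -mulrBr Normc.normcM.
Qed.

Lemma restr_normZ a z : restr_norm (fun k => a * z k) = |. a .| * restr_norm z.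
Proof.
apply/le_anti; rewrite restr_normZ_le /=.
have [a0|a0] := eqVneq a 0; first by rewrite a0 Normc.normc0 mul0r restr_norm_ge0.
have := restr_normZ_le a^-1 (fun k => a * z k).
have -> : (fun k => a^-1 * (a * z k)) = z by apply/funext => k; rewrite mulKf.
by rewrite Normc.normcV -ler_pdivlMl ?normc_gt0 // mulrC.
Qed.

(* A norming functional of [restr_norm] at [v] has the form [z |-> \sum_k c k * z k];
   its pullback [f |-> \sum_k c k * f (e k)] has dual norm at most one because
   [restr_norm (f \o e) <= restr_cost (f \o e) f = N f]. *)
Lemma restr_norm_dual v : exists c : 'I_n -> C,
  (restr_norm v)%:C = \sum_k c k * v k /\
  dnorm (evals [seq (c k, e k) | k <- index_enum 'I_n]) <= 1.
Proof.
have [L [Llin L_le Lv]] := @norming_functional R 'I_n setT restr_norm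
  Logic.I (fun _ _ _ _ _ => Logic.I) (fun z w _ _ => restr_normD z w)
  (fun a z _ => restr_normZ a z) v Logic.I.
have Lsum := linear_ord_sum (fun a z w => Llin a z w Logic.I Logic.I).
exists (fun k => L (fun j => (j == k)%:R)); split.
  by rewrite -Lv Lsum; apply: eq_bigr => k _; rewrite mulrC.
apply: dual_norm_le => f Ff Nf.
rewrite /evals big_map -(eq_bigr _ (fun k _ => mulrC _ _)) -Lsum.
apply: le_trans (L_le _ Logic.I) _; apply: le_trans (restr_norm_le _ Ff) _.
rewrite /restr_cost /l1norm big1 ?mulr0 ?addr0 // => k _.
by rewrite subrr Normc.normc0.
Qed.

End FiniteRestriction.

Definition bidual_fun (Psi : ((X -> C) -> C) -> C) (x : X) := Psi (fun f => f x).

Section Bidual.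
Variable Psi : ((X -> C) -> C) -> C.
Hypothesis Psi_lin : forall a phi psi, dual phi -> dual psi ->
  Psi (fun f => a * phi f + psi f) = a * Psi phi + Psi psi.
Variable M : R.
Hypothesis M_gt0 : 0 < M.
Hypothesis Psi_le : forall phi, dual phi -> |. Psi phi .| <= M * dnorm phi.
Local Notation g := (bidual_fun Psi).

Lemma bidual0 : Psi (fun=> 0) = 0.
Proof. exact: linear_fun0 dual_zero Psi_lin. Qed.

Lemma bidual_evals s : Psi (evals s) = evals s g.
Proof.
elim: s => [|u s IH]; first by rewrite evals_nil bidual0.
by rewrite evals_cons Psi_lin ?IH ?evals_cons //; [exact: dual_eval | exact: dual_evals].
Qed.

(* By [restr_norm_dual] and [|Psi phi| <= M * dnorm phi], [restr_norm] is at
   most [1/2] at the values of [g / 2M], so some [f] in [F] has cost below [1]. *)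
Lemma goldstine_fin n (e : 'I_n -> X) eps : 0 < eps -> exists2 f, unit_ball f &
  forall k, |. f (e k) - (2 * M)^-1%:C * g (e k) .| < eps.
Proof.
move=> eps_gt0; pose v k := (2 * M)^-1%:C * g (e k).
have [c [qv phi_le1]] := restr_norm_dual e eps_gt0 v.
set phi := evals _ in phi_le1.
have half : restr_norm e eps v <= 2^-1.
  have qE : (restr_norm e eps v)%:C = (2 * M)^-1%:C * Psi phi.
    rewrite qv bidual_evals /evals big_map mulr_sumr.
    by apply: eq_bigr => k _; rewrite /v mulrCA.
  have := congr1 (@Normc.normc R) qE.
  rewrite normc_real ger0_norm ?restr_norm_ge0 // Normc.normcM normc_real.
  rewrite ger0_norm => [->|]; last by rewrite invr_ge0 mulr_ge0 // ltW.
  apply: le_trans (ler_wpM2l _ (Psi_le (dual_evals _))) _.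
    by rewrite invr_ge0 mulr_ge0 // ltW.
  rewrite invfM -mulrA mulKf ?gt_eqF // -[leRHS]mulr1.
  by rewrite ler_wpM2l // invr_ge0.
have [f Ff cost_lt1] : exists2 f, F f & restr_cost e eps v f < 1.
  by apply: inf_image_lt; [exists (fun=> 0) | apply: le_lt_trans half _; lra].
have epsV_gt0 : 0 < eps^-1 by rewrite invr_gt0.
have l1_lt : l1norm (fun k => v k - f (e k)) < eps.
  rewrite -(ltr_pM2l epsV_gt0) mulVf ?gt_eqF //.
  by move: cost_lt1; rewrite /restr_cost; have := N_ge0 Ff; lra.
exists f => [|k].
  split => //; move: cost_lt1; rewrite /restr_cost.
  by have := mulr_ge0 (ltW epsV_gt0) (l1norm_ge0 (fun k => v k - f (e k))); lra.
rewrite -normcN opprB; apply: le_lt_trans l1_lt.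
by rewrite /l1norm (bigD1 k) //= lerDl sumr_ge0 // => j _; exact: normc_ge0.
Qed.

Lemma bidual_fun_in_closure :
  pointwise_closure unit_ball (fun x => (2 * M)^-1%:C * g x).
Proof.
move=> S eps finS eps_gt0.
have [B SB] := (@finite_fsetP {classic X} S).1 finS.
pose s := finmap.enum_fset B.
have [f Ff near_g] := goldstine_fin (fun k : 'I_(size s) => tnth (in_tuple s) k) eps_gt0.
exists f; split => // x Sx.
have x_s : (x : {classic X}) \in s by rewrite SB in Sx.
have := near_g (Ordinal (etrans (index_mem _ _) x_s)).
by rewrite (tnth_nth x) /= (@nth_index {classic X}).
Qed.

End Bidual.

Lemma regular_evals_dense_reflexive :
  regular_fs F N -> evals_span_dense F N -> reflexive_fs F N.
Proof.
move=> reg dense Psi [Psi_lin [M0 Psi_le0]].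
pose M := `|M0| + 1.
have M_gt0 : 0 < M by rewrite ltr_wpDl.
have Psi_le phi : dual phi -> |. Psi phi .| <= M * dnorm phi.
  move=> dphi; apply: le_trans (Psi_le0 _ dphi) _.
  by rewrite ler_wpM2r ?dual_norm_ge0 // (le_trans (ler_norm M0)) // lerDl.
pose g := bidual_fun Psi.
have [Fg' _] := reg _ (bidual_fun_in_closure Psi_lin M_gt0 Psi_le).
have Fg : F g.
  have := fun_spaceZ (2 * M)%:C Fg'; congr F; apply/funext => x.
  by rewrite mulrA -rmorphM mulfV ?rmorph1 ?mul1r // gt_eqF // mulr_gt0.
exists g; split => // phi dphi.
apply/subr0_eq/Normc.eq0_normc/le_anti; rewrite normc_ge0 andbT.
apply/ler_addgt0Pr => eps eps_gt0; rewrite add0r.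
have K_gt0 : 0 < M + N g + 1 by have := N_ge0 Fg; lra.
have [s chi_small] := dense phi dphi _ (divr_gt0 eps_gt0 K_gt0).
pose chi f := phi f - evals s f.
have dchi : dual chi by exact: dual_sub_evals.
have -> : Psi phi - phi g = Psi chi - chi g.
  have Psi_phi : Psi phi = Psi chi + evals s g.
    rewrite -bidual_evals // -[Psi chi]mul1r -Psi_lin //; last exact: dual_evals.
    by congr Psi; apply/funext => f; rewrite /chi; ring.
  by rewrite Psi_phi /chi; ring.
apply: le_trans (le_normcD _ _) _; rewrite normcN.
have := Psi_le _ dchi; have := dual_norm_bound dchi Fg; have := dual_norm_ge0 dchi.
have : dnorm chi * (M + N g + 1) <= eps by rewrite -ler_pdivlMr //; exact: ltW.
have := N_ge0 Fg; nra.
Qed.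

End NormedFunSpace.

Theorem proposition5p1 (R : realType) (X : Type)
    (F : set (X -> R[i])) (N : (X -> R[i]) -> R) :
  normed_fun_space F N ->
  (reflexive_fs F N <-> regular_fs F N /\ evals_span_dense F N).
Proof.
move=> FN; split=> [refl|[reg dense]].
  by split; [exact: reflexive_regular | exact: reflexive_evals_dense].
exact: regular_evals_dense_reflexive.
Qed.
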